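(* Let $G=\langle X\rangle$ be a group, let $a,b\in G$ be elements of infinite order which are not proper powers in $G$, and let $H=\langle G,t\mid t^{-1}at=b\rangle$ be the HNN-extension of $G$ associated to the isomorphism $\langle a\rangle\to\langle b\rangle$, $a\mapsto b$. Then for every $g_0\in G$, if $g_0$ is not a proper power in $G$, then its image in $H$ is not a proper power in $H$.
   Context: An element $g$ of a group $K$ is a proper power in $K$ if $g=h^k$ for some $h\in K$ and some integer $k\ge2$. *)

Record Group := {
  gcar :> Type;
  gmul : gcar -> gcar -> gcar;
  gone : gcar;
  ginv : gcar -> gcar;
  gmulA : forall x y z, gmul x (gmul y z) = gmul (gmul x y) z;
  gmul1l : forall x, gmul gone x = x;
  gmulVl : forall x, gmul (ginv x) x = gone
}.

Arguments gmul {g} _ _.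
Arguments gone {g}.
Arguments ginv {g} _.

Fixpoint gpow {G : Group} (x : G) (n : nat) : G :=
  match n with
  | O => gone
  | S m => gmul x (gpow x m)
  end.

Definition is_hom {G K : Group} (f : G -> K) : Prop :=
  forall x y : G, f (gmul x y) = gmul (f x) (f y).

Definition infinite_order {G : Group} (g : G) : Prop :=
  forall n : nat, 0 < n -> gpow g n <> gone.

Definition proper_power {G : Group} (g : G) : Prop :=
  exists (h : G) (k : nat), 2 <= k /\ g = gpow h k.

(* (H, iota, t) is the HNN-extension < G, t | t^-1 a t = b >, characterized
   by the universal property of this presentation: iota : G -> H is a
   homomorphism, t^-1 iota(a) t = iota(b), and for every group K, every
   homomorphism f : G -> K and every s in K with s^-1 f(a) s = f(b) there is a
   unique homomorphism phi : H -> K with phi o iota = f and phi t = s. *)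
Definition is_HNN (G : Group) (a b : G) (H : Group) (iota : G -> H) (t : H)
  : Prop :=
  is_hom iota /\
  gmul (ginv t) (gmul (iota a) t) = iota b /\
  forall (K : Group) (f : G -> K) (s : K),
    is_hom f ->
    gmul (ginv s) (gmul (f a) s) = f b ->
    (exists phi : H -> K,
        is_hom phi /\ (forall g : G, phi (iota g) = f g) /\ phi t = s) /\
    (forall phi1 phi2 : H -> K,
        is_hom phi1 -> is_hom phi2 ->
        (forall g : G, phi1 (iota g) = phi2 (iota g)) ->
        phi1 t = phi2 t ->
        forall h : H, phi1 h = phi2 h).

(* H acts on the Britton normal forms [g t^e1 r1 ... t^en rn] (each [ri] the
   chosen representative of its coset of [<a>] or [<b>], no pinch [t^e 1 t^-e]);
   the action is defined on generators and extended by the universal property,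
   so every [h] in H has a normal form and hence a t-length.

   Suppose [iota g0] is conjugate to [h^k] with [k >= 2]; induct on the t-length
   of [h]. If [h] lies in [G], peel the conjugator letter by letter: crossing a
   letter [t^e r] turns an element of [G] conjugate to a proper power into a power
   [x^q] of [a] or [b] and then into the same power of the other generator; as
   [a] and [b] are not proper powers, [q <> 1, -1], so this is again a proper
   power, and in the end [g0] is a proper power in [G]. If the normal form of [h]
   is cyclically reducible, conjugate [h] to a shorter element. Otherwise the
   t-length of [h^n] is at least [n], whereas the powers of a conjugate of
   [iota g0] by [c] have t-length at most [tlength c^-1 + tlength c]. *)

From Stdlib Require Import List ZArith Lia.
From Stdlib Require Import Classical ClassicalEpsilon FunctionalExtensionality ProofIrrelevance
  PropExtensionality.
Import ListNotations.

Local Notation "x ** y" := (gmul x y) (at level 40, left associativity).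
Local Notation "x ^-1" := (ginv x) (at level 2, left associativity, format "x ^-1").

Section GroupTheory.
Context {G : Group}.
Implicit Types x y z d : G.

Lemma mulgA x y z : x ** (y ** z) = x ** y ** z. Proof. apply gmulA. Qed.
Lemma mul1g x : gone ** x = x. Proof. apply gmul1l. Qed.
Lemma mulVg x : x^-1 ** x = gone. Proof. apply gmulVl. Qed.

Lemma mulgV x : x ** x^-1 = gone.
Proof.
  rewrite <- (mul1g (x ** x^-1)), <- (mulVg x^-1) at 1.
  rewrite <- mulgA, (mulgA x^-1 x), mulVg, mul1g. apply mulVg.
Qed.

Lemma mulg1 x : x ** gone = x.
Proof. rewrite <- (mulVg x), mulgA, mulgV, mul1g. reflexivity. Qed.

Lemma mulKg x y : x^-1 ** (x ** y) = y.
Proof. rewrite mulgA, mulVg, mul1g. reflexivity. Qed.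
Lemma mulKVg x y : x ** (x^-1 ** y) = y.
Proof. rewrite mulgA, mulgV, mul1g. reflexivity. Qed.
Lemma mulgK x y : x ** y ** y^-1 = x.
Proof. rewrite <- mulgA, mulgV, mulg1. reflexivity. Qed.
Lemma mulgKV x y : x ** y^-1 ** y = x.
Proof. rewrite <- mulgA, mulVg, mulg1. reflexivity. Qed.

Lemma mulgI x y z : x ** y = x ** z -> y = z.
Proof. intro E. rewrite <- (mulKg x y), E, mulKg. reflexivity. Qed.
Lemma mulIg x y z : y ** x = z ** x -> y = z.
Proof. intro E. rewrite <- (mulgK y x), E, mulgK. reflexivity. Qed.

Lemma invg_unique x y : x ** y = gone -> x^-1 = y.
Proof. intro E. apply (mulgI x). rewrite mulgV. auto. Qed.

Lemma invgK x : x^-1^-1 = x.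
Proof. apply invg_unique, mulVg. Qed.
Lemma invg1 : (gone : G)^-1 = gone.
Proof. apply invg_unique, mul1g. Qed.
Lemma invMg x y : (x ** y)^-1 = y^-1 ** x^-1.
Proof. apply invg_unique. rewrite <- mulgA, (mulgA y), mulgV, mul1g, mulgV. reflexivity. Qed.

Lemma gpowSr x n : gpow x (S n) = gpow x n ** x.
Proof.
  induction n as [|n IH]; simpl in *; [now rewrite mulg1, mul1g|].
  now rewrite <- mulgA, <- IH.
Qed.

Lemma gpowD x m n : gpow x (m + n) = gpow x m ** gpow x n.
Proof. induction m as [|m IH]; simpl; [now rewrite mul1g | now rewrite IH, mulgA]. Qed.

Lemma gpowM x m n : gpow x (m * n) = gpow (gpow x m) n.
Proof.
  induction n as [|n IH]; simpl; [now rewrite Nat.mul_0_r|].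
  now rewrite Nat.mul_succ_r, Nat.add_comm, gpowD, IH.
Qed.

Lemma gpow1n n : gpow (gone : G) n = gone.
Proof. induction n as [|n IH]; simpl; [|rewrite IH, mul1g]; reflexivity. Qed.

Lemma gpowVn x n : gpow x^-1 n = (gpow x n)^-1.
Proof. induction n as [|n IH]; simpl; [now rewrite invg1|now rewrite IH, <- invMg, <- gpowSr]. Qed.

Lemma gpow_semiconj x y u n : x ** u = u ** y -> gpow x n ** u = u ** gpow y n.
Proof.
  intro E. induction n as [|n IH]; simpl; [now rewrite mul1g, mulg1|].
  now rewrite <- mulgA, IH, mulgA, E, mulgA.
Qed.

Lemma gpow_conj d x n : gpow (d ** x ** d^-1) n = d ** gpow x n ** d^-1.
Proof.
  apply (mulIg d). rewrite mulgKV. apply gpow_semiconj. now rewrite mulgKV.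
Qed.

Lemma proper_power_conj d x : proper_power x -> proper_power (d ** x ** d^-1).
Proof. intros (h & k & Hk & ->). exists (d ** h ** d^-1), k. now rewrite gpow_conj. Qed.

Lemma proper_power_invg x : proper_power x^-1 -> proper_power x.
Proof.
  intros (h & k & Hk & E). exists h^-1, k.
  now rewrite gpowVn, <- E, invgK.
Qed.

Definition zpow x (m : Z) : G :=
  match m with
  | Z0 => gone
  | Zpos p => gpow x (Pos.to_nat p)
  | Zneg p => (gpow x (Pos.to_nat p))^-1
  end.

Lemma zpow_of_nat x n : zpow x (Z.of_nat n) = gpow x n.
Proof. destruct n; simpl; [|rewrite SuccNat2Pos.id_succ]; reflexivity. Qed.

Lemma zpowN x m : zpow x (- m) = (zpow x m)^-1.
Proof. destruct m; simpl; [now rewrite invg1 | reflexivity | now rewrite invgK]. Qed.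

Lemma zpow1 x : zpow x 1 = x.
Proof. apply mulg1. Qed.

Lemma zpow_nonneg x m : (0 <= m)%Z -> zpow x m = gpow x (Z.to_nat m).
Proof. intro. rewrite <- (Z2Nat.id m) at 1 by lia. apply zpow_of_nat. Qed.

Lemma zpow_neg x m : (m < 0)%Z -> zpow x m = (gpow x (Z.to_nat (- m)))^-1.
Proof.
  intro. rewrite <- (Z.opp_involutive m) at 1. now rewrite zpowN, zpow_nonneg by lia.
Qed.

Lemma zpowS x m : zpow x (m + 1) = x ** zpow x m.
Proof.
  destruct (Z_lt_le_dec m 0) as [Hm|Hm].
  - destruct (Z.eq_dec m (-1)) as [->|Hm1]; [simpl; now rewrite mulg1, mulgV|].
    rewrite !zpow_neg by lia.
    replace (Z.to_nat (- m)) with (S (Z.to_nat (- (m + 1)))) by lia.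
    now rewrite gpowSr, invMg, mulKVg.
  - rewrite !zpow_nonneg by lia.
    now replace (Z.to_nat (m + 1)) with (S (Z.to_nat m)) by lia.
Qed.

Lemma zpowD x m n : zpow x (m + n) = zpow x m ** zpow x n.
Proof.
  induction m as [|m IH|m IH] using Z.peano_ind.
  - now rewrite mul1g.
  - rewrite <- Z.add_1_r, <- Z.add_assoc, (Z.add_comm 1), Z.add_assoc, !zpowS, IH.
    apply mulgA.
  - apply (mulgI x). rewrite mulgA, <- !zpowS.
    now replace (Z.pred m + n + 1)%Z with (m + n)%Z by lia; replace (Z.pred m + 1)%Z with m by lia.
Qed.

Lemma zpow_inj x m n : infinite_order x -> zpow x m = zpow x n -> m = n.
Proof.
  intros Hx E.
  assert (E0 : zpow x (m - n) = gone).
  { apply (mulIg (zpow x n)). now rewrite <- zpowD, mul1g, Z.sub_add. }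
  destruct (Z.lt_trichotomy (m - n) 0) as [Hl|[He|Hg]]; [exfalso| lia |exfalso].
  - rewrite zpow_neg in E0 by lia.
    apply (Hx (Z.to_nat (- (m - n)))); [lia|].
    now rewrite <- (invgK (gpow _ _)), E0, invg1.
  - rewrite zpow_nonneg in E0 by lia. apply (Hx (Z.to_nat (m - n))); [lia | exact E0].
Qed.

Lemma zpow_semiconj x y u m : x ** u = u ** y -> zpow x m ** u = u ** zpow y m.
Proof.
  intro E. destruct m as [|p|p]; simpl; [now rewrite mul1g, mulg1 | now apply gpow_semiconj|].
  apply (mulgI (gpow x (Pos.to_nat p))).
  now rewrite mulKVg, mulgA, (gpow_semiconj x y u _ E), mulgK.
Qed.

Lemma proper_power_zpow x q : q <> 1%Z -> q <> (-1)%Z -> proper_power (zpow x q).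
Proof.
  intros H1 H2. destruct (Z.lt_trichotomy q 0) as [Hl|[->|Hg]].
  - exists x^-1, (Z.to_nat (- q)). rewrite zpow_neg, gpowVn by lia. split; [lia | reflexivity].
  - exists gone, 2. now rewrite gpow1n.
  - exists x, (Z.to_nat q). rewrite zpow_nonneg by lia. split; [lia | reflexivity].
Qed.

Lemma zpow_proper_power_exponent x q :
  ~ proper_power x -> proper_power (zpow x q) -> q <> 1%Z /\ q <> (-1)%Z.
Proof.
  intros Hx Hq. split; intros ->; apply Hx; simpl in Hq; rewrite mulg1 in Hq;
    [exact Hq | now apply proper_power_invg].
Qed.

End GroupTheory.

Section Morphisms.
Variables (G K : Group) (f : G -> K).
Hypothesis f_morph : is_hom f.

Lemma morph1 : f gone = gone.
Proof. apply (mulgI (f gone)). now rewrite <- f_morph, !mulg1. Qed.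

Lemma morphV x : f x^-1 = (f x)^-1.
Proof. symmetry. apply invg_unique. now rewrite <- f_morph, mulgV, morph1. Qed.

Lemma morph_gpow x n : f (gpow x n) = gpow (f x) n.
Proof. induction n as [|n IH]; simpl; [apply morph1 | now rewrite f_morph, IH]. Qed.

Lemma morph_zpow x m : f (zpow x m) = zpow (f x) m.
Proof. destruct m; simpl; [apply morph1 | apply morph_gpow | now rewrite morphV, morph_gpow]. Qed.

End Morphisms.

Record perm (X : Type) := Perm {
  pf : X -> X;
  pg : X -> X;
  pfK : forall x, pf (pg x) = x;
  pgK : forall x, pg (pf x) = x
}.
Arguments Perm {X}.
Arguments pf {X} _ _.
Arguments pg {X} _ _.

Lemma perm_ext X (p q : perm X) : (forall x, pf p x = pf q x) -> p = q.
Proof.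
  destruct p as [f g fK gK], q as [f' g' fK' gK']; simpl. intro E.
  assert (f = f') as <- by now apply functional_extensionality.
  assert (g = g') as <-.
  { apply functional_extensionality. intro x. now rewrite <- (fK' x) at 1; rewrite gK. }
  f_equal; apply proof_irrelevance.
Qed.

Section SymGroup.
Variable X : Type.

Definition perm_mul (p q : perm X) : perm X.
Proof.
  refine (Perm (fun x => pf p (pf q x)) (fun x => pg q (pg p x)) _ _);
    intro x; now rewrite ?pfK, ?pgK.
Defined.

Definition perm_one : perm X :=
  Perm (fun x => x) (fun x => x) (fun _ => eq_refl) (fun _ => eq_refl).

Definition perm_inv (p : perm X) : perm X := Perm (pg p) (pf p) (pgK X p) (pfK X p).

Definition sym_group : Group.
Proof.
  refine (Build_Group (perm X) perm_mul perm_one perm_inv _ _ _);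
    intros; apply perm_ext; intros; simpl; now rewrite ?pgK.
Defined.

End SymGroup.

Section HNNGeneration.
Variables (G : Group) (a b : G) (H : Group) (iota : G -> H) (t : H).
Hypothesis hH : is_HNN G a b H iota t.

Definition left_translation (h : H) : sym_group (H * bool).
Proof.
  refine (Perm (fun p => (h ** fst p, snd p)) (fun p => (h^-1 ** fst p, snd p)) _ _);
    intros [x c]; simpl; now rewrite ?mulKVg, ?mulKg.
Defined.

Lemma left_translation_morph : is_hom left_translation.
Proof. intros x y. apply perm_ext. intros [u c]. simpl. now rewrite mulgA. Qed.

Variable P : H -> Prop.
Hypotheses (P_mul : forall x y, P x -> P y -> P (x ** y)) (P_inv : forall x, P x -> P x^-1).

Definition flip_outside (p : H * bool) : H * bool :=
  if excluded_middle_informative (P (fst p)) then p else (fst p, negb (snd p)).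

Lemma flip_outside_in p : P (fst p) -> flip_outside p = p.
Proof. intro Pp. unfold flip_outside. now destruct (excluded_middle_informative _). Qed.

Lemma flip_outside_notin p : ~ P (fst p) -> flip_outside p = (fst p, negb (snd p)).
Proof. intro Pp. unfold flip_outside. now destruct (excluded_middle_informative _). Qed.

Lemma fst_flip_outside p : fst (flip_outside p) = fst p.
Proof. unfold flip_outside. now destruct (excluded_middle_informative _). Qed.

Lemma flip_outsideK p : flip_outside (flip_outside p) = p.
Proof.
  destruct (classic (P (fst p))) as [Pp|Pp].
  - now rewrite !(flip_outside_in p Pp).
  - rewrite (flip_outside_notin p), flip_outside_notin by auto.
    destruct p. simpl. now rewrite Bool.negb_involutive.
Qed.

Lemma flip_outside_translate x p : P x ->
  flip_outside (x ** fst p, snd p) = (x ** fst p, snd (flip_outside p)).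
Proof.
  intro Px. destruct p as [y c]. simpl.
  destruct (classic (P y)) as [Py|Py].
  - rewrite !flip_outside_in; simpl; auto.
  - rewrite !flip_outside_notin; simpl; auto.
    contradict Py. rewrite <- (mulKg x y). auto.
Qed.

Definition flip_perm : sym_group (H * bool) :=
  Perm flip_outside flip_outside flip_outsideK flip_outsideK.

Hypotheses (P_iota : forall g, P (iota g)) (P_t : P t).

(* Left translation and its conjugate by [flip_perm] are morphisms that agree on
   [iota] and [t], hence everywhere; evaluating both at [(gone, true)] gives [P h]. *)
Lemma HNN_generated h : P h.
Proof.
  destruct hH as (iota_morph & rel & univ).
  assert (Hf : is_hom (fun g => left_translation (iota g))).
  { intros x y. rewrite iota_morph. apply left_translation_morph. }
  assert (Hr : (left_translation t)^-1 ** (left_translation (iota a) ** left_translation t)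
               = left_translation (iota b)).
  { rewrite <- rel, !left_translation_morph. now rewrite (morphV _ _ _ left_translation_morph). }
  assert (E : left_translation h = flip_perm ** (left_translation h ** flip_perm)).
  { apply (proj2 (univ _ _ _ Hf Hr) _ (fun h => flip_perm ** (left_translation h ** flip_perm))).
    - apply left_translation_morph.
    - intros x y. apply perm_ext. intro p. simpl. rewrite flip_outsideK. simpl. now rewrite mulgA.
    - intro g. apply perm_ext. intro p. simpl.
      now rewrite flip_outside_translate, flip_outsideK, fst_flip_outside.
    - apply perm_ext. intro p. simpl.
      now rewrite flip_outside_translate, flip_outsideK, fst_flip_outside. }
  apply NNPP. intro Ph.
  assert (P1 : P gone) by (rewrite <- (morph1 _ _ iota iota_morph); auto).
  pose proof (f_equal (fun q : sym_group (H * bool) => pf q (gone, true)) E) as E1. simpl in E1.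
  rewrite (flip_outside_in (gone, true)) in E1 by exact P1. simpl in E1.
  rewrite flip_outside_notin in E1 by (simpl; now rewrite mulg1).
  discriminate.
Qed.

End HNNGeneration.

(* [(g, [(e1, r1); ...; (en, rn)])] stands for [g t^e1 r1 ... t^en rn]. *)
Local Notation word G := (list (bool * gcar G)).
Local Notation nform G := (gcar G * word G)%type.

Section NormalForms.
Context {G : Group} (a b : G).
Hypotheses (ha : infinite_order a) (hb : infinite_order b).

(* A letter [e : bool] stands for [t] ([true]) or [t^-1] ([false]); the relation
   reads [t^e ** gen e ^ m = gen (negb e) ^ m ** t^e]. *)
Definition gen (e : bool) : G := if e then b else a.

Lemma gen_infinite_order e : infinite_order (gen e).
Proof. now destruct e. Qed.

Definition in_gen e (x : G) : Prop := exists m, x = zpow (gen e) m.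

Lemma in_gen1 e : in_gen e gone.
Proof. now exists 0%Z. Qed.

Lemma in_gen_gen e : in_gen e (gen e).
Proof. exists 1%Z. now rewrite zpow1. Qed.

Lemma in_genM e x y : in_gen e x -> in_gen e y -> in_gen e (x ** y).
Proof. intros [m ->] [n ->]. exists (m + n)%Z. now rewrite zpowD. Qed.

Lemma in_genV e x : in_gen e x -> in_gen e x^-1.
Proof. intros [m ->]. exists (- m)%Z. now rewrite zpowN. Qed.

Lemma in_genMr e x p : in_gen e (x ** p) -> in_gen e p -> in_gen e x.
Proof. intros Hxp Hp. rewrite <- (mulgK x p). auto using in_genM, in_genV. Qed.

Lemma in_genMl e x p : in_gen e (p ** x) -> in_gen e p -> in_gen e x.
Proof. intros Hpx Hp. rewrite <- (mulKg p x). auto using in_genM, in_genV. Qed.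

Definition gen_log e (x : G) : Z := epsilon (inhabits 0%Z) (fun m => x = zpow (gen e) m).

Definition transfer e (x : G) : G := zpow (gen (negb e)) (gen_log e x).

Lemma transfer_zpow e m : transfer e (zpow (gen e) m) = zpow (gen (negb e)) m.
Proof.
  unfold transfer, gen_log. f_equal. symmetry.
  apply (zpow_inj (gen e)); [apply gen_infinite_order|].
  apply (epsilon_spec (inhabits 0%Z) (fun k => zpow (gen e) m = zpow (gen e) k)). eauto.
Qed.

Lemma in_gen_transfer e x : in_gen (negb e) (transfer e x).
Proof. now exists (gen_log e x). Qed.

Lemma transferK e p : in_gen e p -> transfer (negb e) (transfer e p) = p.
Proof. intros [m ->]. now rewrite !transfer_zpow, Bool.negb_involutive. Qed.

Lemma transfer_gen_mul e p : in_gen e p -> transfer e (gen e ** p) = gen (negb e) ** transfer e p.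
Proof.
  intros [m ->]. rewrite <- (zpow1 (gen e)) at 1.
  now rewrite <- zpowD, !transfer_zpow, zpowD, zpow1.
Qed.

Definition is_coset_rep e (x r : G) : Prop := in_gen e (x ** r^-1) /\ (in_gen e x -> r = gone).

Definition coset_rep e (x : G) : G := epsilon (inhabits gone) (is_coset_rep e x).

Lemma coset_rep_spec e x : is_coset_rep e x (coset_rep e x).
Proof.
  unfold coset_rep. apply epsilon_spec. destruct (classic (in_gen e x)).
  - exists gone. split; auto. now rewrite invg1, mulg1.
  - exists x. split; [rewrite mulgV; apply in_gen1 | tauto].
Qed.

Lemma coset_rep_mull e p x : in_gen e p -> coset_rep e (p ** x) = coset_rep e x.
Proof.
  intro Hp. unfold coset_rep. f_equal.
  apply functional_extensionality. intro r. apply propositional_extensionality.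
  unfold is_coset_rep. rewrite <- mulgA.
  split; intros [H1 H2]; split.
  - now apply (in_genMl _ _ p).
  - intro. apply H2. now apply in_genM.
  - now apply in_genM.
  - intro. apply H2. now apply (in_genMl _ _ p).
Qed.

Lemma coset_rep_eq1 e x : coset_rep e x = gone <-> in_gen e x.
Proof.
  destruct (coset_rep_spec e x) as [H1 H2]. split; auto.
  intro E. now rewrite E, invg1, mulg1 in H1.
Qed.

Lemma coset_repK e x : coset_rep e (coset_rep e x) = coset_rep e x.
Proof.
  rewrite <- (mulgKV x (coset_rep e x)) at 2.
  symmetry. apply coset_rep_mull, coset_rep_spec.
Qed.

Lemma coset_rep_eq e x y : coset_rep e x = coset_rep e y -> in_gen e (x ** y^-1).
Proof.
  intro E. destruct (coset_rep_spec e x) as [Hx _], (coset_rep_spec e y) as [Hy _].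
  rewrite E in Hx.
  replace (x ** y^-1) with (x ** (coset_rep e y)^-1 ** (y ** (coset_rep e y)^-1)^-1)
    by now rewrite invMg, invgK, mulgA, mulgKV.
  auto using in_genM, in_genV.
Qed.

Definition head_letter (w : word G) : option bool := hd_error (map fst w).

Definition cancels e (r : G) (w : word G) : Prop := r = gone /\ head_letter w = Some (negb e).

Fixpoint normal_word (w : word G) : Prop :=
  match w with
  | [] => True
  | (e, r) :: w' => coset_rep e r = r /\ ~ cancels e r w' /\ normal_word w'
  end.

Definition nf_lmul (g : G) (x : nform G) : nform G := (g ** fst x, snd x).

(* Left multiplication by [t^e]: split [h = p ** r] with [p] in [<gen e>] and move
   [p] across [t^e]. *)
Definition tmul (e : bool) (x : nform G) : nform G :=
  let (h, w) := x in
  let r := coset_rep e h in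
  let p := transfer e (h ** r^-1) in
  if excluded_middle_informative (cancels e r w) then
    match w with (_, r') :: w' => (p ** r', w') | [] => x end
  else (p, (e, r) :: w).

Lemma tmul_nocancel e h w : ~ cancels e (coset_rep e h) w ->
  tmul e (h, w) = (transfer e (h ** (coset_rep e h)^-1), (e, coset_rep e h) :: w).
Proof. intro C. simpl. now destruct (excluded_middle_informative _). Qed.

Lemma tmul_cancel e h r w : in_gen e h ->
  tmul e (h, (negb e, r) :: w) = (transfer e h ** r, w).
Proof.
  intro Hh. apply coset_rep_eq1 in Hh. simpl. rewrite Hh, invg1, mulg1.
  destruct (excluded_middle_informative _) as [_|C]; [reflexivity|].
  now contradict C.
Qed.

Lemma tmul_cases e h w :
  (in_gen e h /\ exists r w', w = (negb e, r) :: w' /\ tmul e (h, w) = (transfer e h ** r, w')) \/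
  (~ cancels e (coset_rep e h) w /\
   tmul e (h, w) = (transfer e (h ** (coset_rep e h)^-1), (e, coset_rep e h) :: w)).
Proof.
  destruct (classic (cancels e (coset_rep e h) w)) as [[H1 H2]|C].
  - left. apply coset_rep_eq1 in H1. split; auto.
    destruct w as [|[e' r] w']; simpl in H2; [discriminate|].
    injection H2 as ->. exists r, w'. auto using tmul_cancel.
  - right. auto using tmul_nocancel.
Qed.

Lemma normal_word_tmul e x : normal_word (snd x) -> normal_word (snd (tmul e x)).
Proof.
  destruct x as [h w]. intro Hw.
  destruct (tmul_cases e h w) as [(_ & r & w' & -> & ->)|(C & ->)]; simpl in *.
  - tauto.
  - auto using coset_repK.
Qed.

Lemma tmulK e x : normal_word (snd x) -> tmul (negb e) (tmul e x) = x.
Proof.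
  destruct x as [h w]. intro Hw.
  destruct (tmul_cases e h w) as [(Hh & r & w' & -> & ->)|(C & ->)].
  - destruct Hw as (Hr & C & _).
    rewrite tmul_nocancel; rewrite coset_rep_mull, Hr by apply in_gen_transfer.
    + now rewrite mulgK, transferK.
    + exact C.
  - pose proof (tmul_cancel (negb e) _ (coset_rep e h) w
      (in_gen_transfer e (h ** (coset_rep e h)^-1))) as E.
    rewrite Bool.negb_involutive in E.
    rewrite E, transferK by apply coset_rep_spec. now rewrite mulgKV.
Qed.

Lemma tmul_gen e x : tmul e (nf_lmul (gen e) x) = nf_lmul (gen (negb e)) (tmul e x).
Proof.
  destruct x as [h w]. unfold nf_lmul; simpl.
  rewrite coset_rep_mull by apply in_gen_gen.
  rewrite <- mulgA, transfer_gen_mul by apply coset_rep_spec.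
  destruct (excluded_middle_informative _) as [[_ Hw]|]; [|reflexivity].
  destruct w as [|[e' r'] w']; [discriminate | simpl; now rewrite mulgA].
Qed.

Fixpoint word_act (w : word G) (x : nform G) : nform G :=
  match w with
  | [] => x
  | (e, g) :: w' => tmul e (nf_lmul g (word_act w' x))
  end.

Fixpoint reduced_word (w : word G) : Prop :=
  match w with
  | [] => True
  | (e, g) :: w' => ~ (in_gen e g /\ head_letter w' = Some (negb e)) /\ reduced_word w'
  end.

Lemma normal_word_reduced w : normal_word w -> reduced_word w.
Proof.
  induction w as [|[e r] w IH]; simpl; auto.
  intros (Hr & C & Hw). split; auto. intros [Hg Hh]. apply C. split; auto.
  rewrite <- Hr. now apply coset_rep_eq1.
Qed.

Lemma normal_word_last w e r : normal_word (w ++ [(e, r)]) -> coset_rep e r = r.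
Proof.
  induction w as [|[e' r'] w IH]; simpl; [tauto|]. intros (_ & _ & Hw). auto.
Qed.

Lemma length_tmul e x : length (snd (tmul e x)) <= S (length (snd x)).
Proof.
  destruct x as [h w].
  destruct (tmul_cases e h w) as [(_ & r & w' & -> & ->)|(_ & ->)]; simpl; lia.
Qed.

Lemma length_word_act w x : length (snd (word_act w x)) <= length w + length (snd x).
Proof.
  induction w as [|[e g] w IH]; simpl; [lia|].
  pose proof (length_tmul e (nf_lmul g (word_act w x))). simpl in *. lia.
Qed.

Lemma head_letter_app_cons (u v : word G) e x y l l' : map fst u = map fst v ->
  head_letter (u ++ (e, x) :: l) = head_letter (v ++ (e, y) :: l').
Proof. intro E. unfold head_letter. destruct u as [|[]], v as [|[]]; simpl in *; congruence. Qed.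

Lemma word_act_reduced w en gn y l :
  reduced_word (w ++ [(en, gn)]) -> ~ (in_gen en (gn ** y) /\ head_letter l = Some (negb en)) ->
  exists p L, word_act (w ++ [(en, gn)]) (y, l) = (p, L ++ (en, coset_rep en (gn ** y)) :: l) /\
    map fst L = map fst w /\
    forall e, head_letter (w ++ [(en, gn)]) = Some e -> in_gen (negb e) p.
Proof.
  intros Hred Hl. induction w as [|[e g] w IH]; cbn [app word_act] in *; unfold nf_lmul.
  - rewrite tmul_nocancel.
    + exists (transfer en (gn ** y ** (coset_rep en (gn ** y))^-1)), [].
      repeat split. intros e [= <-]. apply in_gen_transfer.
    + intros [C1 C2]. apply Hl. now rewrite <- coset_rep_eq1.
  - destruct Hred as [Hg Hred].
    destruct (IH Hred) as (p & L & -> & HL & Hp). cbn [fst snd].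
    rewrite tmul_nocancel.
    + eexists. exists ((e, coset_rep e (g ** p)) :: L). simpl. rewrite HL.
      repeat split. intros e' [= <-]. apply in_gen_transfer.
    + intros [C1 C2]. apply Hg. rewrite (head_letter_app_cons _ w _ _ gn _ []) in C2 by exact HL.
      split; [|exact C2].
      apply (in_genMr _ _ p); [now apply coset_rep_eq1|].
      rewrite <- (Bool.negb_involutive e). auto.
Qed.

End NormalForms.

Section Representation.
Context {G : Group} (a b : G).
Hypotheses (ha : infinite_order a) (hb : infinite_order b).

Definition normal_form : Type := {x : nform G | normal_word a b (snd x)}.

Lemma normal_form_eq (x y : normal_form) : proj1_sig x = proj1_sig y -> x = y.
Proof. apply eq_sig_hprop. intros. apply proof_irrelevance. Qed.

Definition nf_gmul (g : G) (x : normal_form) : normal_form :=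
  exist _ (nf_lmul g (proj1_sig x)) (proj2_sig x).

Definition nf_tmul e (x : normal_form) : normal_form :=
  exist _ (tmul a b e (proj1_sig x)) (normal_word_tmul a b e _ (proj2_sig x)).

Lemma nf_tmulK e x : nf_tmul (negb e) (nf_tmul e x) = x.
Proof. apply normal_form_eq. destruct x as [x Hx]. now apply tmulK. Qed.

Definition gact (g : G) : sym_group normal_form.
Proof.
  refine (Perm (nf_gmul g) (nf_gmul g^-1) _ _); intros [[h w] Hw]; apply normal_form_eq;
    simpl; unfold nf_lmul; simpl; now rewrite ?mulKVg, ?mulKg.
Defined.

Definition tact : sym_group normal_form :=
  Perm (nf_tmul true) (nf_tmul false) (nf_tmulK false) (nf_tmulK true).

Lemma gact_morph : is_hom gact.
Proof.
  intros x y. apply perm_ext. intros [[h w] Hw]. apply normal_form_eq.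
  simpl; unfold nf_lmul; simpl. now rewrite mulgA.
Qed.

Lemma tact_conj : tact^-1 ** (gact a ** tact) = gact b.
Proof.
  apply perm_ext. intro x. simpl.
  assert (E : nf_tmul true (nf_gmul b x) = nf_gmul a (nf_tmul true x)).
  { apply normal_form_eq. exact (tmul_gen a b ha hb true (proj1_sig x)). }
  rewrite <- E. exact (nf_tmulK true _).
Qed.

End Representation.

Section HNNNormalForms.
Context {G : Group} (a b : G).
Hypotheses (ha : infinite_order a) (hb : infinite_order b).
Variables (H : Group) (iota : G -> H) (t : H).
Hypothesis hH : is_HNN G a b H iota t.
Variable phi : H -> sym_group (normal_form a b).
Hypotheses (phi_morph : is_hom phi) (phi_iota : forall g, phi (iota g) = gact a b g)
  (phi_t : phi t = tact a b ha hb).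

Lemma iota_morph : is_hom iota.
Proof. apply hH. Qed.

Definition tpow (e : bool) : H := if e then t else t^-1.

Lemma tpowV e : (tpow e)^-1 = tpow (negb e).
Proof. destruct e; simpl; [reflexivity | apply invgK]. Qed.

Lemma tpow_zpow e m :
  tpow e ** iota (zpow (gen a b e) m) = iota (zpow (gen a b (negb e)) m) ** tpow e.
Proof.
  assert (R : iota a ** t = t ** iota b).
  { destruct hH as (_ & rel & _). rewrite <- rel. now rewrite mulKVg. }
  pose proof (zpow_semiconj _ _ _ m R) as C.
  rewrite <- !(morph_zpow _ _ iota iota_morph) in C.
  destruct e; simpl; [now symmetry|].
  apply (mulIg t). now rewrite mulgKV, <- mulgA, C, mulKg.
Qed.

Fixpoint word_val (w : word G) : H :=
  match w with
  | [] => gone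
  | (e, g) :: w' => tpow e ** iota g ** word_val w'
  end.

Definition nform_val (x : nform G) : H := iota (fst x) ** word_val (snd x).

Lemma word_val_app w w' : word_val (w ++ w') = word_val w ** word_val w'.
Proof. induction w as [|[e g] w IH]; simpl; [now rewrite mul1g | now rewrite IH, !mulgA]. Qed.

Lemma nform_val_lmul g x : nform_val (nf_lmul g x) = iota g ** nform_val x.
Proof. unfold nform_val, nf_lmul. simpl. now rewrite iota_morph, mulgA. Qed.

Lemma nform_val_tmul e x : nform_val (tmul a b e x) = tpow e ** nform_val x.
Proof.
  destruct x as [h w]. unfold nform_val.
  destruct (tmul_cases a b e h w) as [([m ->] & r & w' & -> & ->)|(_ & ->)]; simpl.
  - rewrite transfer_zpow, iota_morph by auto.
    rewrite (mulgA (tpow e)), tpow_zpow, <- (tpowV e), <- !mulgA. now rewrite mulKVg.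
  - destruct (coset_rep_spec a b e h) as [[m Em] _].
    rewrite Em, transfer_zpow by auto.
    rewrite <- (mulgKV h (coset_rep a b e h)) at 2. rewrite Em, iota_morph.
    now rewrite !mulgA, tpow_zpow.
Qed.

Lemma nform_val_phi h x : nform_val (proj1_sig (pf (phi h) x)) = h ** nform_val (proj1_sig x).
Proof.
  revert x. pattern h. apply (HNN_generated G a b H iota t hH); clear h.
  - intros h k Ph Pk x. now rewrite phi_morph, <- mulgA, <- Pk, <- Ph.
  - intros h Ph x. apply (mulgI h). rewrite mulKVg, <- Ph.
    change (pf (phi h) (pf (phi h^-1) x)) with (pf (phi h ** phi h^-1) x).
    now rewrite <- phi_morph, mulgV, (morph1 _ _ phi phi_morph).
  - intros g x. rewrite phi_iota. apply nform_val_lmul.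
  - intro x. rewrite phi_t. apply nform_val_tmul.
Qed.

Definition nf_base : normal_form a b := exist _ (gone, []) I.

Definition nf (h : H) : nform G := proj1_sig (pf (phi h) nf_base).

Definition tlength (h : H) : nat := length (snd (nf h)).

Lemma nf_val h : nform_val (nf h) = h.
Proof.
  unfold nf. rewrite nform_val_phi. unfold nform_val. simpl.
  now rewrite (morph1 _ _ iota iota_morph), !mulg1.
Qed.

Lemma normal_word_nf h : normal_word a b (snd (nf h)).
Proof. exact (proj2_sig (pf (phi h) nf_base)). Qed.

Lemma phi_word_val w x : proj1_sig (pf (phi (word_val w)) x) = word_act a b w (proj1_sig x).
Proof.
  induction w as [|[e g] w IH]; simpl.
  - now rewrite (morph1 _ _ phi phi_morph).
  - rewrite !phi_morph, phi_iota. simpl. rewrite <- IH.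
    destruct e; simpl; [now rewrite phi_t|].
    now rewrite (morphV _ _ phi phi_morph), phi_t.
Qed.

Lemma nf_mul h k : nf (h ** k) = nf_lmul (fst (nf h)) (word_act a b (snd (nf h)) (nf k)).
Proof.
  unfold nf at 1. rewrite <- (nf_val h) at 1. unfold nform_val.
  rewrite !phi_morph, phi_iota. simpl. now rewrite phi_word_val.
Qed.

Lemma nf_iota_mul g k : nf (iota g ** k) = nf_lmul g (nf k).
Proof. unfold nf. now rewrite phi_morph, phi_iota. Qed.

Lemma nf_iota g : nf (iota g) = (g, []).
Proof.
  rewrite <- (mulg1 (iota g)), nf_iota_mul. unfold nf.
  rewrite (morph1 _ _ phi phi_morph). unfold nf_lmul; simpl. now rewrite mulg1.
Qed.

Lemma iota_inj x y : iota x = iota y -> x = y.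
Proof. intro E. pose proof (nf_iota x) as Ex. rewrite E, nf_iota in Ex. congruence. Qed.

Lemma tlength_mul h k : tlength (h ** k) <= tlength h + tlength k.
Proof. unfold tlength at 1. rewrite nf_mul. apply length_word_act. Qed.

Lemma tlength_iota_mul g k : tlength (iota g ** k) = tlength k.
Proof. unfold tlength. now rewrite nf_iota_mul. Qed.

Lemma tlength_iota g : tlength (iota g) = 0.
Proof. unfold tlength. now rewrite nf_iota. Qed.

Lemma tlength_word_val w : tlength (word_val w) <= length w.
Proof.
  unfold tlength, nf. rewrite phi_word_val.
  pose proof (length_word_act a b w (gone, [])). simpl in *. lia.
Qed.

Lemma nf_nil h : snd (nf h) = [] -> h = iota (fst (nf h)).
Proof.
  intro E. rewrite <- (nf_val h) at 1. unfold nform_val. rewrite E. apply mulg1.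
Qed.

Hypotheses (npa : ~ proper_power a) (npb : ~ proper_power b).

Lemma gen_not_proper_power e : ~ proper_power (gen a b e).
Proof. now destruct e. Qed.

Lemma nf_snoc c c0 w e r : nf c = (c0, w ++ [(e, r)]) ->
  exists c', c = c' ** (tpow e ** iota r) /\ tlength c' < tlength c.
Proof.
  intro Ec. exists (iota c0 ** word_val w). split.
  - rewrite <- (nf_val c), Ec. unfold nform_val. simpl.
    now rewrite word_val_app, mulgA; simpl; rewrite mulg1.
  - rewrite tlength_iota_mul. pose proof (tlength_word_val w).
    unfold tlength at 2. rewrite Ec. simpl. rewrite length_app. simpl. lia.
Qed.

Lemma conj_iota_last_letter c c0 w e r y z : nf c = (c0, w ++ [(e, r)]) ->
  iota y ** c = c ** iota z -> in_gen a b e (r ** z ** r^-1).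
Proof.
  intros Ec E. apply coset_rep_eq.
  pose proof (normal_word_nf c) as Hn. rewrite Ec in Hn. simpl in Hn.
  pose proof (f_equal nf E) as N. rewrite nf_iota_mul, nf_mul, nf_iota, Ec in N. simpl in N.
  destruct (word_act_reduced a b w e r z []) as (p & L & EL & _);
    [now apply normal_word_reduced | now intros [_ Hl] |].
  rewrite EL in N. injection N as _ N. apply app_inj_tail in N. destruct N as [_ N].
  injection N as N. rewrite <- N. symmetry. exact (normal_word_last a b w e r Hn).
Qed.

Lemma proper_power_of_conjugate c : forall y z,
  iota y ** c = c ** iota z -> proper_power z -> proper_power y.
Proof.
  induction c as [c IH] using (well_founded_induction (Wf_nat.well_founded_ltof _ tlength)).
  intros y z E Pz.
  destruct (nf c) as [c0 ws] eqn:Ec.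
  destruct ws as [|[e r] w _] using rev_ind.
  - assert (Ec0 : c = iota c0) by (rewrite (nf_nil c); rewrite Ec; reflexivity).
    rewrite Ec0, <- !iota_morph in E. apply iota_inj in E.
    rewrite <- (mulgK y c0), E. now apply proper_power_conj.
  - destruct (conj_iota_last_letter c c0 w e r y z Ec E) as [q Eq].
    destruct (nf_snoc c c0 w e r Ec) as (c' & -> & Hlt).
    (* Crossing [t^e r] conjugates [iota z] to the transfer of [r z r^-1]. *)
    apply (IH c' Hlt y (zpow (gen a b (negb e)) q)).
    + apply (mulIg (tpow e ** iota r)). rewrite <- mulgA, E, <- !mulgA. f_equal.
      rewrite (mulgA (iota _)), <- tpow_zpow, <- Eq, <- !mulgA, <- !iota_morph.
      now rewrite !mulgA, mulgKV.
    + destruct (zpow_proper_power_exponent (gen a b e) q) as [Hq1 Hq2].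
      * apply gen_not_proper_power.
      * rewrite <- Eq. now apply proper_power_conj.
      * now apply proper_power_zpow.
Qed.

(* Conjugation by [g t^e1] cancels the outer letters of [g t^e1 ... t^en r]. *)
Definition cyclically_reducible (x : nform G) : Prop :=
  exists w e r, snd x = w ++ [(e, r)] /\ head_letter (snd x) = Some (negb e) /\
    in_gen a b e (r ** fst x).

Lemma nf_gpow_grows h h0 w en rn e1 :
  nf h = (h0, w ++ [(en, rn)]) -> head_letter (w ++ [(en, rn)]) = Some e1 ->
  ~ (e1 = negb en /\ in_gen a b en (rn ** h0)) ->
  forall n, exists p L, nf (gpow h (S n)) = (h0 ** p, L) /\
    in_gen a b (negb e1) p /\ head_letter L = Some e1 /\ S n <= length L.
Proof.
  intros Eh He1 Hcyc.
  assert (Hred : reduced_word a b (w ++ [(en, rn)])).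
  { apply normal_word_reduced. pose proof (normal_word_nf h) as Hn. now rewrite Eh in Hn. }
  induction n as [|n (p & L & EL & Hp & HL & Hlen)].
  - exists gone, (w ++ [(en, rn)]). simpl. rewrite !mulg1, Eh.
    rewrite length_app. simpl. repeat split; auto using in_gen1. lia.
  - change (gpow h (S (S n))) with (h ** gpow h (S n)).
    rewrite nf_mul, Eh, EL. simpl.
    destruct (word_act_reduced a b w en rn (h0 ** p) L Hred) as (p' & L' & -> & HL' & Hp').
    { intros [Hin Hhd]. apply Hcyc. rewrite HL in Hhd. injection Hhd as ->. split; [reflexivity|].
      rewrite Bool.negb_involutive in Hp.
      apply (in_genMr _ _ _ _ p); [now rewrite <- mulgA | exact Hp]. }
    exists p', (L' ++ (en, coset_rep a b en (rn ** (h0 ** p))) :: L).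
    unfold nf_lmul. simpl. repeat split; auto.
    + rewrite <- He1. now apply head_letter_app_cons.
    + rewrite length_app. simpl. lia.
Qed.

Lemma tlength_gpow_ge h : snd (nf h) <> [] -> ~ cyclically_reducible (nf h) ->
  forall n, n <= tlength (gpow h n).
Proof.
  intros Hne Hcyc [|n]; [lia|].
  destruct (nf h) as [h0 ws] eqn:Eh. simpl in Hne.
  destruct ws as [|[en rn] w _] using rev_ind; [congruence|].
  destruct (head_letter (w ++ [(en, rn)])) as [e1|] eqn:He1;
    [|destruct w as [|[]]; discriminate].
  assert (Hnc : ~ (e1 = negb en /\ in_gen a b en (rn ** h0))).
  { intros [-> Hin]. apply Hcyc. exists w, en, rn. repeat split; auto. }
  destruct (nf_gpow_grows h h0 w en rn e1 Eh He1 Hnc n) as (p & L & EL & _ & _ & Hlen).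
  unfold tlength. now rewrite EL.
Qed.

Lemma cyclically_reducible_conj h : cyclically_reducible (nf h) ->
  exists d h', h = d ** h' ** d^-1 /\ tlength h' < tlength h.
Proof.
  destruct (nf h) as [h0 ws] eqn:Eh. intros (w & en & rn & Ews & Hhd & [q Eq]).
  simpl in *. subst ws.
  destruct w as [|[e1 r1] w]; simpl in Hhd; injection Hhd as He1; [now destruct en|]. subst e1.
  set (Z := zpow (gen a b (negb en)) q).
  assert (K : tpow en ** iota (rn ** h0) ** tpow (negb en) = iota Z).
  { now rewrite Eq, tpow_zpow, <- tpowV, mulgK. }
  exists (iota h0 ** tpow (negb en)), (iota r1 ** word_val w ** iota Z). split.
  - rewrite <- (nf_val h), Eh. unfold nform_val. simpl. rewrite word_val_app. simpl.
    rewrite <- K, invMg, iota_morph. rewrite !mulgA, mulg1. now rewrite mulgK, mulgK.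
  - unfold tlength at 2. rewrite Eh. simpl. rewrite length_app. simpl.
    pose proof (tlength_mul (iota r1 ** word_val w) (iota Z)).
    rewrite tlength_iota, tlength_iota_mul in *. pose proof (tlength_word_val w). lia.
Qed.

Lemma iota_not_conj_power g0 k : ~ proper_power g0 -> 2 <= k ->
  forall h c, iota g0 ** c <> c ** gpow h k.
Proof.
  intros ng0 Hk h.
  induction h as [h IH] using (well_founded_induction (Wf_nat.well_founded_ltof _ tlength)).
  intros c E.
  destruct (classic (snd (nf h) = [])) as [Hnil|Hne].
  - rewrite (nf_nil h Hnil), <- (morph_gpow _ _ iota iota_morph) in E.
    apply ng0. apply (proper_power_of_conjugate c _ _ E). now exists (fst (nf h)), k.
  - destruct (classic (cyclically_reducible (nf h))) as [Hcyc|Hcyc].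
    + destruct (cyclically_reducible_conj h Hcyc) as (d & h' & -> & Hlt).
      apply (IH h' Hlt (c ** d)).
      rewrite gpow_conj in E. rewrite mulgA, E, <- !mulgA. now rewrite mulVg, mulg1.
    + set (N := tlength c^-1 + tlength c).
      pose proof (tlength_gpow_ge h Hne Hcyc (k * S N)) as Hge.
      rewrite gpowM in Hge.
      assert (Ec : gpow (gpow h k) (S N) = c^-1 ** iota (gpow g0 (S N)) ** c).
      { rewrite (morph_gpow _ _ iota iota_morph), <- mulgA, (gpow_semiconj _ _ _ _ E).
        now rewrite mulKg. }
      rewrite Ec in Hge.
      pose proof (tlength_mul (c^-1 ** iota (gpow g0 (S N))) c) as M.
      pose proof (tlength_mul c^-1 (iota (gpow g0 (S N)))) as M'.
      rewrite tlength_iota in M'. unfold N in *. nia.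
Qed.

End HNNNormalForms.

Theorem lemma3p14 (G : Group) (a b : G)
  (ha : infinite_order a) (hb : infinite_order b)
  (npa : ~ proper_power a) (npb : ~ proper_power b)
  (H : Group) (iota : G -> H) (t : H)
  (hH : is_HNN G a b H iota t)
  (g0 : G) (ng0 : ~ proper_power g0) :
  ~ proper_power (iota g0).
Proof.
  intros (h & k & Hk & E).
  destruct (proj1 (proj2 (proj2 hH) _ _ _ (gact_morph a b) (tact_conj a b ha hb)))
    as (phi & phi_morph & phi_iota & phi_t).
  apply (iota_not_conj_power a b ha hb H iota t hH phi phi_morph phi_iota phi_t npa npb
    g0 k ng0 Hk h gone).
  now rewrite mulg1, mul1g.
Qed.
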